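(* Let $\alpha>-1$ and $s\in\mathbb N$. Then for every integer $n\ge s$, $$J_n^{(\alpha,-s)}(u)=\frac{(n-s)!}{n!}\,(1+u)^s\,\widehat P_{n-s}^{(\alpha,s)}(u),$$ and consequently, for $n\ge s$, $$J_n^{(\alpha,-s)}(u)=\frac{(-1)^s2^s}{(-\alpha-n)_s}\,A_{n-s}^{(\alpha,s)}\,P_n^{(\alpha,-s)}(u).$$
   Context: $(a)_k=a(a+1)\cdots(a+k-1)$ is the Pochhammer symbol. For real parameters $\alpha,\beta$ and $n\in\mathbb N_0$, the Jacobi polynomial is $P_n^{(\alpha,\beta)}(u)=\sum_{k=0}^n\frac{(\alpha+k+1)_{n-k}\,(-n)_k\,(n+\alpha+\beta+1)_k}{n!\,k!}\left(\frac{1-u}{2}\right)^k$ (i.e. $\frac{(\alpha+1)_n}{n!}{}_2F_1(-n,n+\alpha+\beta+1;\alpha+1;\frac{1-u}{2})$, defined for all real parameters). Whenever $(n+\alpha+\beta+1)_n\neq0$ put $A_n^{(\alpha,\beta)}=\frac{2^n}{(n+\alpha+\beta+1)_n}$ and $\widehat P_n^{(\alpha,\beta)}=A_n^{(\alpha,\beta)}P_n^{(\alpha,\beta)}$. For $s\in\mathbb N$ and $\alpha>-1-s$, define polynomials $J_n^{(\alpha,-s)}$, $n\in\mathbb N_0$, by $J_n^{(\alpha,-s)}(u)=\frac{(u+1)^n}{n!}$ for $0\le n\le s-1$ and $J_n^{(\alpha,-s)}(u)=\int_{-1}^{u}\frac{(u-w)^{s-1}}{(s-1)!}\,\widehat P_{n-s}^{(\alpha+s,0)}(w)\,\mathrm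 dw$ for $n\ge s$. *)

From Stdlib Require Import Reals.
From Coquelicot Require Import Coquelicot.
Open Scope R_scope.

Fixpoint poch (a : R) (k : nat) : R :=
  match k with
  | O => 1
  | S k' => poch a k' * (a + INR k')
  end.

Definition jacobiP (alpha beta : R) (n : nat) (u : R) : R :=
  sum_f_R0 (fun k =>
      poch (alpha + INR k + 1) (n - k) * poch (- INR n) k
      * poch (INR n + alpha + beta + 1) k / (INR (Factorial.fact n) * INR (Factorial.fact k))
      * ((1 - u) / 2) ^ k) n.

Definition jacA (alpha beta : R) (n : nat) : R :=
  2 ^ n / poch (INR n + alpha + beta + 1) n.

Definition jacobiPhat (alpha beta : R) (n : nat) (u : R) : R :=
  jacA alpha beta n * jacobiP alpha beta n u.

Definition jacJ (alpha : R) (s n : nat) (u : R) : R :=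
  if (n <? s)%nat then (u + 1) ^ n / INR (Factorial.fact n)
  else RInt (fun w => (u - w) ^ (s - 1) / INR (Factorial.fact (s - 1))
                      * jacobiPhat (alpha + INR s) 0 (n - s) w) (-1) u.

(* J_n is the s-fold iterated integral from -1 of Phat^(alpha+s,0)_(n-s).  With m = n - s,
   the functions F_j = m!/(m+s-j)! (1+u)^(s-j) Phat^(alpha+j,s-j)_m satisfy F_j' = F_(j+1),
   by the rule d/du[(1+u)^(b+1) P^(a,b+1)_m] = (m+b+1) (1+u)^b P^(a+1,b)_m, and F_s is the
   integrand.  Since F_j(-1) = 0 for j < s, Taylor's formula with integral remainder at -1
   collapses to J_n = F_0, the first identity.  The second one is the classical relation
   (-2)^s P^(alpha,-s)_n = (-alpha-n)_s (n-s)!/n! (1+u)^s P^(alpha,s)_(n-s), proved by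
   induction on s: differentiating lowers s by one and raises alpha by one, and both sides
   agree at u = 1.  The hypothesis alpha > -1 only ensures (-alpha-n)_s <> 0. *)

From Stdlib Require Import Reals Lra Lia.
From Coquelicot Require Import Coquelicot.
Open Scope R_scope.

Lemma is_derive_eq (f : R -> R) (x l l' : R) : is_derive f x l -> l = l' -> is_derive f x l'.
Proof. intros H <-; exact H. Qed.

Lemma is_derive_Rmult (f g : R -> R) (x df dg : R) :
  is_derive f x df -> is_derive g x dg ->
  is_derive (fun t => f t * g t) x (df * g x + f x * dg).
Proof. intros Hf Hg. apply (is_derive_mult f g x df dg Hf Hg). intros; apply Rmult_comm. Qed.

Lemma eq_of_is_derive_eq (f g df : R -> R) (x0 u : R) :
  (forall v, is_derive f v (df v)) -> (forall v, is_derive g v (df v)) ->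
  f x0 = g x0 -> f u = g u.
Proof.
  intros Hf Hg H0.
  assert (Hconst : forall a b, f a - g a = f b - g b).
  { assert (Hd : forall t, is_derive (fun v => f v - g v) t 0).
    { intros t. eapply is_derive_eq; [apply (is_derive_minus f g); auto|].
      unfold minus, plus, opp; simpl; ring. }
    intros a b. destruct (Rtotal_order a b) as [Hl|[->|Hg']].
    - apply (eq_is_derive (fun v => f v - g v)); auto.
    - reflexivity.
    - symmetry; apply (eq_is_derive (fun v => f v - g v)); auto. }
  specialize (Hconst x0 u); lra.
Qed.

Lemma poch_succ_l x k : poch x (S k) = x * poch (x + 1) k.
Proof.
  revert x; induction k as [|k IH]; intros x; [simpl; ring|].
  change (poch x (S (S k))) with (poch x (S k) * (x + INR (S k))).
  rewrite IH. change (poch (x + 1) (S k)) with (poch (x + 1) k * (x + 1 + INR k)).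
  rewrite S_INR. ring.
Qed.

Lemma poch_opp_nat_vanish n k : (n < k)%nat -> poch (- INR n) k = 0.
Proof.
  induction k as [|k IH]; intros H; [lia|]. simpl.
  destruct (Nat.eq_dec n k) as [->|Hne]; [ring|].
  rewrite IH by lia. ring.
Qed.

Lemma poch_add x j k : poch x (j + k) = poch x j * poch (x + INR j) k.
Proof.
  induction k as [|k IH]; [rewrite Nat.add_0_r; simpl; ring|].
  rewrite Nat.add_succ_r; simpl. rewrite IH, plus_INR. ring.
Qed.

Lemma poch_opp y k : poch (- y) k = (-1) ^ k * poch (y - INR k + 1) k.
Proof.
  revert y; induction k as [|k IH]; intros y; [simpl; ring|].
  simpl poch at 1. rewrite IH, poch_succ_l.
  replace (y - INR (S k) + 1 + 1) with (y - INR k + 1) by (rewrite S_INR; ring).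
  rewrite S_INR. simpl. ring.
Qed.

Lemma poch_neq0 x k : (forall i, (i < k)%nat -> x + INR i <> 0) -> poch x k <> 0.
Proof.
  induction k as [|k IH]; intros H; simpl; [lra|].
  apply Rmult_integral_contrapositive_currified; [apply IH; intros|]; apply H; lia.
Qed.

Definition peval (c : nat -> R) (N : nat) (x : R) : R := sum_f_R0 (fun k => c k * x ^ k) N.

Lemma peval_S c N x : peval c (S N) x = peval c N x + c (S N) * x ^ S N.
Proof. reflexivity. Qed.

Lemma peval_ext c d N x : (forall k, (k <= N)%nat -> c k = d k) -> peval c N x = peval d N x.
Proof.
  intros H; induction N as [|N IH]; [unfold peval; simpl; rewrite H; auto|].
  rewrite !peval_S, IH, H; auto.
Qed.

Lemma peval_high_zero c N M x : (forall k, (N < k)%nat -> c k = 0) -> (N <= M)%nat ->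
  peval c M x = peval c N x.
Proof. intros H HM; induction HM as [|M HM IH]; auto. rewrite peval_S, IH, H by lia. ring. Qed.

Lemma peval_scal r c N x : r * peval c N x = peval (fun k => r * c k) N x.
Proof. induction N as [|N IH]; [unfold peval; simpl; ring|]. rewrite !peval_S, <- IH. ring. Qed.

Lemma peval_minus c d N x : peval c N x - peval d N x = peval (fun k => c k - d k) N x.
Proof. induction N as [|N IH]; [unfold peval; simpl; ring|]. rewrite !peval_S, <- IH. ring. Qed.

Lemma peval_mul_x c N x :
  x * peval c N x = peval (fun k => match k with O => 0 | S j => c j end) (S N) x.
Proof.
  induction N as [|N IH]; [unfold peval; simpl; ring|].
  rewrite peval_S, Rmult_plus_distr_l, IH, (peval_S _ (S N)). simpl. ring.
Qed.

Lemma peval_at0 c N : peval c N 0 = c 0%nat.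
Proof. induction N as [|N IH]; [unfold peval; simpl; ring|]. rewrite peval_S, IH. simpl. ring. Qed.

Lemma is_derive_peval c N x :
  is_derive (peval c (S N)) x (peval (fun k => INR (S k) * c (S k)) N x).
Proof.
  induction N as [|N IH].
  - unfold peval; simpl. auto_derive; auto. ring.
  - apply (is_derive_ext (fun t => peval c (S N) t + c (S (S N)) * t ^ S (S N)));
      [intros t; reflexivity|].
    eapply is_derive_eq; [apply (is_derive_plus (peval c (S N)) (fun t => c (S (S N)) * t ^ S (S N)));
      [exact IH|]; apply is_derive_scal;
      apply (is_derive_pow (fun t => t)), is_derive_id|].
    rewrite (peval_S _ N). simpl pred. change (plus ?a ?b) with (a + b); change one with 1. ring.
Qed.

Definition jacobi_coef (a b : R) (n k : nat) : R :=
  poch (a + INR k + 1) (n - k) * poch (- INR n) k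
  * poch (INR n + a + b + 1) k / (INR (Factorial.fact n) * INR (Factorial.fact k)).

Lemma jacobiP_peval a b n u : jacobiP a b n u = peval (jacobi_coef a b n) n ((1 - u) / 2).
Proof. reflexivity. Qed.

Lemma jacobi_coef_high a b n k : (n < k)%nat -> jacobi_coef a b n k = 0.
Proof. intros H; unfold jacobi_coef; rewrite poch_opp_nat_vanish by exact H. unfold Rdiv; ring. Qed.

Lemma is_derive_jacobiP_peval a b n u :
  is_derive (jacobiP a b n) u
    (-(1/2) * peval (fun k => INR (S k) * jacobi_coef a b n (S k)) n ((1 - u) / 2)).
Proof.
  apply (is_derive_ext (fun t => peval (jacobi_coef a b n) (S n) ((1 - t) / 2))).
  { intros t. rewrite jacobiP_peval. apply peval_high_zero; [|lia].
    intros; apply jacobi_coef_high; lia. }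
  eapply is_derive_eq.
  - apply (is_derive_comp (peval (jacobi_coef a b n) (S n)) (fun t => (1 - t) / 2)).
    + apply is_derive_peval.
    + auto_derive; auto.
  - change (scal ?a ?b) with (a * b). field.
Qed.

Lemma jacobi_coef_derive a b n k :
  -(1/2) * (INR (S k) * jacobi_coef a b (S n) (S k))
  = (INR (S n) + a + b + 1) / 2 * jacobi_coef (a + 1) (b + 1) n k.
Proof.
  unfold jacobi_coef.
  replace (S n - S k)%nat with (n - k)%nat by lia.
  rewrite (poch_succ_l (- INR (S n))), (poch_succ_l (INR (S n) + a + b + 1)).
  replace (a + INR (S k) + 1) with (a + 1 + INR k + 1) by (rewrite S_INR; ring).
  replace (- INR (S n) + 1) with (- INR n) by (rewrite S_INR; ring).
  replace (INR (S n) + a + b + 1 + 1) with (INR n + (a + 1) + (b + 1) + 1)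
    by (rewrite S_INR; ring).
  change (Factorial.fact (S n)) with (S n * Factorial.fact n)%nat.
  change (Factorial.fact (S k)) with (S k * Factorial.fact k)%nat.
  rewrite !mult_INR.
  assert (INR (S n) <> 0) by (apply not_0_INR; lia).
  assert (INR (S k) <> 0) by (apply not_0_INR; lia).
  pose proof (INR_fact_neq_0 n). pose proof (INR_fact_neq_0 k).
  field. repeat split; auto.
Qed.

Lemma is_derive_jacobiP a b n u : (1 <= n)%nat ->
  is_derive (jacobiP a b n) u ((INR n + a + b + 1) / 2 * jacobiP (a + 1) (b + 1) (n - 1) u).
Proof.
  intros Hn. destruct n as [|n]; [lia|].
  eapply is_derive_eq; [apply is_derive_jacobiP_peval|].
  replace (S n - 1)%nat with n by lia.
  rewrite jacobiP_peval, <- (peval_high_zero _ n (S n)); [|intros; apply jacobi_coef_high; lia|lia].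
  rewrite !peval_scal, !peval_S, !jacobi_coef_high by lia.
  f_equal; [apply peval_ext; intros; apply jacobi_coef_derive | ring].
Qed.

Lemma jacobiP_at_1 a b n : jacobiP a b n 1 = poch (a + 1) n / INR (Factorial.fact n).
Proof.
  rewrite jacobiP_peval. replace ((1 - 1) / 2) with 0 by field. rewrite peval_at0.
  unfold jacobi_coef. rewrite Nat.sub_0_r. replace (a + INR 0 + 1) with (a + 1) by (simpl; ring).
  simpl poch at 2 3. change (Factorial.fact 0) with 1%nat. simpl INR.
  field. apply INR_fact_neq_0.
Qed.

Lemma jacA_eq a b a' b' m : a + b = a' + b' -> jacA a b m = jacA a' b' m.
Proof.
  intros H; unfold jacA.
  replace (INR m + a + b + 1) with (INR m + a' + b' + 1) by lra. reflexivity.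
Qed.

Lemma jacobi_coef_lower_beta a b m k :
  (b + INR k) * jacobi_coef a b m k - INR (S k) * jacobi_coef a b m (S k)
  = (INR m + b) * jacobi_coef (a + 1) (b - 1) m k.
Proof.
  destruct (Compare_dec.lt_eq_lt_dec k m) as [[Hlt| ->]|Hgt].
  - set (j := (m - S k)%nat).
    assert (Ek : (m - k)%nat = S j) by (unfold j; lia).
    assert (Em : INR m = INR k + INR j + 1)
      by (rewrite <- plus_INR, <- S_INR; f_equal; unfold j; lia).
    unfold jacobi_coef. rewrite Ek. fold j.
    rewrite (poch_succ_l (a + INR k + 1)).
    change (poch (- INR m) (S k)) with (poch (- INR m) k * (- INR m + INR k)).
    change (poch (INR m + a + b + 1) (S k))
      with (poch (INR m + a + b + 1) k * (INR m + a + b + 1 + INR k)).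
    change (poch (a + 1 + INR k + 1) (S j))
      with (poch (a + 1 + INR k + 1) j * (a + 1 + INR k + 1 + INR j)).
    replace (a + INR (S k) + 1) with (a + INR k + 1 + 1) by (rewrite S_INR; ring).
    replace (a + 1 + INR k + 1) with (a + INR k + 1 + 1) by ring.
    replace (INR m + (a + 1) + (b - 1) + 1) with (INR m + a + b + 1) by ring.
    change (Factorial.fact (S k)) with (S k * Factorial.fact k)%nat.
    rewrite !mult_INR, Em, S_INR.
    pose proof (INR_fact_neq_0 m). pose proof (INR_fact_neq_0 k). pose proof (pos_INR k).
    field. repeat split; auto; lra.
  - unfold jacobi_coef. rewrite Nat.sub_diag. replace (m - S m)%nat with 0%nat by lia.
    change (poch (- INR m) (S m)) with (poch (- INR m) m * (- INR m + INR m)).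
    replace (INR m + (a + 1) + (b - 1) + 1) with (INR m + a + b + 1) by ring.
    simpl poch at 1. simpl poch at 3. simpl poch at 5.
    pose proof (INR_fact_neq_0 m). pose proof (INR_fact_neq_0 (S m)).
    field. auto.
  - rewrite !jacobi_coef_high by lia. ring.
Qed.

Lemma peval_jacobi_lower_beta a b m x :
  b * peval (jacobi_coef a b m) m x
  - (1 - x) * peval (fun k => INR (S k) * jacobi_coef a b m (S k)) m x
  = (INR m + b) * peval (jacobi_coef (a + 1) (b - 1) m) m x.
Proof.
  set (d := fun k => INR (S k) * jacobi_coef a b m (S k)).
  replace ((1 - x) * peval d m x) with (peval d m x - x * peval d m x) by ring.
  assert (Hhigh : forall c, (forall k, (m < k)%nat -> c k = 0) ->
            peval c m x = peval c (S m) x)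
    by (intros c Hc; symmetry; apply peval_high_zero; auto).
  rewrite peval_mul_x, (Hhigh d), (Hhigh (jacobi_coef a b m)),
    (Hhigh (jacobi_coef (a + 1) (b - 1) m)), !peval_scal, !peval_minus;
    try (intros; unfold d; rewrite jacobi_coef_high by lia; ring).
  apply peval_ext. intros k _. rewrite <- jacobi_coef_lower_beta. unfold d.
  destruct k; simpl; ring.
Qed.

Lemma is_derive_pow_jacobiP a b m u :
  is_derive (fun u => (1 + u) ^ S b * jacobiP a (INR (S b)) m u) u
    (INR (m + S b) * (1 + u) ^ b * jacobiP (a + 1) (INR b) m u).
Proof.
  pose proof (peval_jacobi_lower_beta a (INR (S b)) m ((1 - u) / 2)) as Hlow.
  replace (INR (S b) - 1) with (INR b) in Hlow by (rewrite S_INR; ring).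
  eapply is_derive_eq.
  - apply is_derive_Rmult; [|apply is_derive_jacobiP_peval].
    apply (is_derive_pow (fun t => 1 + t) (S b) u 1). auto_derive; auto; ring.
  - rewrite !jacobiP_peval, plus_INR.
    transitivity ((1 + u) ^ b * ((INR m + INR (S b)) *
      peval (jacobi_coef (a + 1) (INR b) m) m ((1 - u) / 2))); [|ring].
    rewrite <- Hlow. simpl pred. simpl pow. field.
Qed.

Lemma jacobiP_negative_beta_at_1 s a m :
  (-1) ^ s * 2 ^ s * jacobiP a (- INR s) (m + s) 1
  = poch (- a - INR (m + s)) s
    * (INR (Factorial.fact m) / INR (Factorial.fact (m + s))) * (1 + 1) ^ s
    * jacobiP a (INR s) m 1.
Proof.
  rewrite !jacobiP_at_1, poch_add.
  replace (- a - INR (m + s)) with (- (a + INR (m + s))) by ring.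
  rewrite poch_opp.
  replace (a + INR (m + s) - INR s + 1) with (a + 1 + INR m) by (rewrite plus_INR; ring).
  replace (1 + 1) with 2 by ring.
  pose proof (INR_fact_neq_0 m). pose proof (INR_fact_neq_0 (m + s)).
  field. auto.
Qed.

Lemma jacobiP_negative_beta s a m u :
  (-1) ^ s * 2 ^ s * jacobiP a (- INR s) (m + s) u
  = poch (- a - INR (m + s)) s
    * (INR (Factorial.fact m) / INR (Factorial.fact (m + s))) * (1 + u) ^ s
    * jacobiP a (INR s) m u.
Proof.
  revert a u; induction s as [|s IH]; intros a u.
  - rewrite Nat.add_0_r. replace (- INR 0) with (INR 0) by (simpl; ring).
    simpl. field. apply INR_fact_neq_0.
  - set (K := poch (- a - INR (m + S s)) (S s)
                * (INR (Factorial.fact m) / INR (Factorial.fact (m + S s)))).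
    apply (eq_of_is_derive_eq
      (fun v => (-1) ^ S s * 2 ^ S s * jacobiP a (- INR (S s)) (m + S s) v)
      (fun v => K * (1 + v) ^ S s * jacobiP a (INR (S s)) m v)
      (fun v => K * (INR (m + S s) * (1 + v) ^ s * jacobiP (a + 1) (INR s) m v)) 1).
    + intros v. eapply is_derive_eq; [apply is_derive_scal, is_derive_jacobiP; lia|].
      replace (- INR (S s) + 1) with (- INR s) by (rewrite S_INR; ring).
      replace (m + S s - 1)%nat with (m + s)%nat by lia.
      replace ((-1) ^ S s * 2 ^ S s *
        ((INR (m + S s) + a + - INR (S s) + 1) / 2 * jacobiP (a + 1) (- INR s) (m + s) v))
        with (- (INR m + a + 1) * ((-1) ^ s * 2 ^ s * jacobiP (a + 1) (- INR s) (m + s) v))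
        by (rewrite plus_INR, S_INR; simpl pow; field).
      rewrite IH. unfold K.
      replace (- (a + 1) - INR (m + s)) with (- a - INR (m + S s))
        by (rewrite !plus_INR, S_INR; ring).
      change (poch (- a - INR (m + S s)) (S s))
        with (poch (- a - INR (m + S s)) s * (- a - INR (m + S s) + INR s)).
      rewrite Nat.add_succ_r.
      change (Factorial.fact (S (m + s))) with (S (m + s) * Factorial.fact (m + s))%nat.
      rewrite mult_INR.
      assert (INR (S (m + s)) <> 0) by (apply not_0_INR; lia).
      pose proof (INR_fact_neq_0 (m + s)).
      rewrite S_INR, plus_INR in *. field. auto.
    + intros v. apply (is_derive_ext (fun v => K * ((1 + v) ^ S s * jacobiP a (INR (S s)) m v)));
        [intros t; symmetry; apply Rmult_assoc|].
      eapply is_derive_eq; [apply is_derive_scal, is_derive_pow_jacobiP|ring].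
    + apply jacobiP_negative_beta_at_1.
Qed.

Section TaylorIntegralRemainder.

Variables (F : nat -> R -> R) (u : R).

Definition taylor_sum (K : nat) (w : R) : R :=
  sum_f_R0 (fun j => (u - w) ^ j / INR (Factorial.fact j) * F j w) K.

Lemma taylor_sum_at_center K : taylor_sum K u = F 0%nat u.
Proof.
  unfold taylor_sum; induction K as [|K IH]; [simpl; field|].
  rewrite tech5, IH, Rminus_diag, (pow_i (S K)) by lia. unfold Rdiv. ring.
Qed.

Lemma is_derive_taylor_sum K w :
  (forall j w, (j <= K)%nat -> is_derive (F j) w (F (S j) w)) ->
  is_derive (taylor_sum K) w ((u - w) ^ K / INR (Factorial.fact K) * F (S K) w).
Proof.
  revert w; induction K as [|K IH]; intros w HF.
  - unfold taylor_sum; simpl.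
    apply (is_derive_ext (F 0%nat)); [intros; simpl; field|].
    eapply is_derive_eq; [apply HF; lia|field].
  - assert (Hsplit : forall t, taylor_sum K t
        + / INR (Factorial.fact (S K)) * ((u - t) ^ S K * F (S K) t) = taylor_sum (S K) t)
      by (intros t; unfold taylor_sum; rewrite tech5; unfold Rdiv; ring).
    apply (is_derive_ext _ _ _ _ Hsplit).
    eapply is_derive_eq.
    + apply (is_derive_plus (taylor_sum K)); [apply IH; intros; apply HF; lia|].
      apply is_derive_scal, is_derive_Rmult; [|apply HF; lia].
      apply (is_derive_pow (fun t => u - t) (S K) w (-1)). auto_derive; auto; ring.
    + change (Factorial.fact (S K)) with (S K * Factorial.fact K)%nat.
      rewrite mult_INR. simpl pred. change (plus ?a ?b) with (a + b).
      assert (INR (S K) <> 0) by (apply not_0_INR; lia).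
      pose proof (INR_fact_neq_0 K).
      field. auto.
Qed.

Lemma taylor_integral_remainder K a :
  (forall j w, (j <= K)%nat -> is_derive (F j) w (F (S j) w)) ->
  (forall w, continuous (F (S K)) w) ->
  is_RInt (fun w => (u - w) ^ K / INR (Factorial.fact K) * F (S K) w) a u
    (F 0%nat u - taylor_sum K a).
Proof.
  intros HF Hcont. rewrite <- (taylor_sum_at_center K).
  apply (is_RInt_derive (taylor_sum K)); intros w _; [apply is_derive_taylor_sum; auto|].
  apply (continuous_mult (fun w => (u - w) ^ K / INR (Factorial.fact K)) (F (S K))); auto.
  apply (@ex_derive_continuous R_AbsRing R_NormedModule). auto_derive; auto.
Qed.

End TaylorIntegralRemainder.

(* F_j of the header; the normalising factorials make F_j' = F_(j+1) exact. *)
Definition jacobi_primitive (a : R) (s m j : nat) (w : R) : R :=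
  INR (Factorial.fact m) / INR (Factorial.fact (m + (s - j)))
  * ((1 + w) ^ (s - j) * jacobiPhat (a + INR j) (INR (s - j)) m w).

Lemma is_derive_jacobi_primitive a s m j w : (j < s)%nat ->
  is_derive (jacobi_primitive a s m j) w (jacobi_primitive a s m (S j) w).
Proof.
  intros Hj. set (b := (s - S j)%nat). assert (Eb : (s - j)%nat = S b) by (unfold b; lia).
  unfold jacobi_primitive, jacobiPhat. rewrite Eb. fold b.
  set (c := INR (Factorial.fact m) / INR (Factorial.fact (m + S b))).
  set (A := jacA (a + INR j) (INR (S b)) m).
  apply (is_derive_ext (fun w => c * A * ((1 + w) ^ S b * jacobiP (a + INR j) (INR (S b)) m w)));
    [intros t; ring_simplify; reflexivity|].
  eapply is_derive_eq; [apply is_derive_scal, is_derive_pow_jacobiP|].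
  replace (a + INR (S j)) with (a + INR j + 1) by (rewrite S_INR; ring).
  rewrite (jacA_eq (a + INR j + 1) (INR b) (a + INR j) (INR (S b))) by (rewrite S_INR; ring).
  fold A. unfold c. rewrite Nat.add_succ_r.
  change (Factorial.fact (S (m + b))) with (S (m + b) * Factorial.fact (m + b))%nat.
  rewrite mult_INR.
  assert (INR (S (m + b)) <> 0) by (apply not_0_INR; lia).
  pose proof (INR_fact_neq_0 (m + b)).
  field. auto.
Qed.

Lemma jacobi_primitive_at_m1 a s m j : (j < s)%nat -> jacobi_primitive a s m j (-1) = 0.
Proof.
  intros Hj. unfold jacobi_primitive.
  rewrite Rplus_opp_r, (pow_i (s - j)) by lia. ring.
Qed.

Lemma jacobi_primitive_top a s m w :
  jacobi_primitive a s m s w = jacobiPhat (a + INR s) 0 m w.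
Proof.
  unfold jacobi_primitive. rewrite Nat.sub_diag, Nat.add_0_r. simpl.
  pose proof (INR_fact_neq_0 m). field. auto.
Qed.

Lemma jacJ_closed_form a s n u : (1 <= s)%nat -> (s <= n)%nat ->
  jacJ a s n u
  = INR (Factorial.fact (n - s)) / INR (Factorial.fact n) * (1 + u) ^ s
    * jacobiPhat a (INR s) (n - s) u.
Proof.
  intros Hs Hn.
  unfold jacJ. replace (n <? s)%nat with false by (symmetry; apply Nat.ltb_ge; lia).
  set (m := (n - s)%nat).
  assert (HF : forall j w, (j <= s - 1)%nat ->
            is_derive (jacobi_primitive a s m j) w (jacobi_primitive a s m (S j) w))
    by (intros; apply is_derive_jacobi_primitive; lia).
  assert (Hcont : forall w, continuous (jacobi_primitive a s m (S (s - 1))) w).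
  { intros w. apply (@ex_derive_continuous R_AbsRing R_NormedModule).
    apply (ex_derive_ext (jacobiPhat (a + INR s) 0 m)).
    - intros t. rewrite <- jacobi_primitive_top. f_equal. lia.
    - eexists. apply is_derive_scal, is_derive_jacobiP_peval. }
  assert (Hvanish : taylor_sum (jacobi_primitive a s m) u (s - 1) (-1) = 0).
  { apply sum_eq_R0. intros j Hj. rewrite jacobi_primitive_at_m1 by lia. ring. }
  pose proof (taylor_integral_remainder _ u _ (-1) HF Hcont) as HI.
  rewrite Hvanish, Rminus_0_r in HI.
  replace (S (s - 1)) with s in HI by lia.
  rewrite (is_RInt_unique _ _ _ _ (is_RInt_ext _ _ _ _ _
             (fun w _ => f_equal _ (jacobi_primitive_top a s m w)) HI)).
  unfold jacobi_primitive. rewrite Nat.sub_0_r, Rplus_0_r.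
  replace (m + s)%nat with n by (unfold m; lia). ring.
Qed.

Theorem mainTheorem1 (alpha : R) (s : nat) (Halpha : -1 < alpha) (Hs : (1 <= s)%nat)
  (n : nat) (Hn : (s <= n)%nat) (u : R) :
  jacJ alpha s n u
    = INR (Factorial.fact (n - s)) / INR (Factorial.fact n) * (1 + u) ^ s * jacobiPhat alpha (INR s) (n - s) u
  /\
  jacJ alpha s n u
    = (-1) ^ s * 2 ^ s / poch (- alpha - INR n) s * jacA alpha (INR s) (n - s)
      * jacobiP alpha (- INR s) n u.
Proof.
  rewrite jacJ_closed_form by auto. split; [reflexivity|].
  assert (Hpoch : poch (- alpha - INR n) s <> 0).
  { apply poch_neq0. intros i Hi.
    assert (INR i + 1 <= INR n) by (rewrite <- S_INR; apply le_INR; lia). lra. }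
  pose proof (jacobiP_negative_beta s alpha (n - s) u) as Hneg.
  replace (n - s + s)%nat with n in Hneg by lia.
  unfold jacobiPhat.
  replace ((-1) ^ s * 2 ^ s / poch (- alpha - INR n) s * jacA alpha (INR s) (n - s)
           * jacobiP alpha (- INR s) n u)
    with (jacA alpha (INR s) (n - s) / poch (- alpha - INR n) s
          * ((-1) ^ s * 2 ^ s * jacobiP alpha (- INR s) n u)) by (field; auto).
  rewrite Hneg. field. split; [apply INR_fact_neq_0 | exact Hpoch].
Qed.
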